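(* Let $\mathcal{A}:\mathbb{C}^{m\times n}\to\mathbb{C}^p$ be linear with rank-restricted isometry constant $\delta_r(\mathcal{A})$, let $\Psi\subset\mathbb{O}$ be a set of atoms with $|\Psi|\le r$, and let $\mathcal{P}:\mathbb{C}^{m\times n}\to\mathbb{C}^{m\times n}$ be an orthogonal projection operator that commutes with $\mathcal{P}_\Psi$. Then $$(1-\delta_r(\mathcal{A}))\|\mathcal{P}\mathcal{P}_\Psi X\|_F\le\|\mathcal{P}\mathcal{P}_\Psi\mathcal{A}^*\mathcal{A}\mathcal{P}\mathcal{P}_\Psi X\|_F\quad\text{for all }X\in\mathbb{C}^{m\times n}.$$
   Context: $\mathbb{C}^p$ has inner product $\langle x,y\rangle=y^Hx$ and norm $\|\cdot\|_2$; $\mathbb{C}^{m\times n}$ has inner product $\langle X,Y\rangle=\mathrm{tr}(Y^HX)$ and Frobenius norm $\|\cdot\|_F$; $\mathcal{A}^*$ is the adjoint of $\mathcal{A}$. $\delta_r(\mathcal{A})$ is the smallest $\delta\ge0$ such that $(1-\delta)\|X\|_F^2\le\|\mathcal{A}X\|_2^2\le(1+\delta)\|X\|_F^2$ for all $X$ with $\mathrm{rank}(X)\le r$. The set of atoms $\mathbb{O}$ is a set of unit-Frobenius-norm rank-one matrices in $\mathbb{C}^{m\times n}$ such that every nonzero rank-one matrix is a scalar multiple of exactly one element of $\mathbb{O}$. For $\Psi\subset\mathbb{O}$, $\mathcal{P}_\Psi$ is the orthogonal projection of $\mathbb{C}^{m\times n}$ onto $\mathrm{span}(\Psi)$. *)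

From HB Require Import structures.
From mathcomp Require Import all_boot all_order all_algebra.
Set Implicit Arguments. Unset Strict Implicit. Unset Printing Implicit Defensive.
Import Order.TTheory GRing.Theory Num.Theory.
Local Open Scope ring_scope.

(* Complex scalars: an arbitrary numClosedFieldType C (e.g. algC, or
   complex R for a real closed field R); conjugation is z^*. *)

Definition vdot (C : numClosedFieldType) (p : nat) (x y : 'cV[C]_p) : C :=
  \sum_(i < p) x i 0 * (y i 0)^*.

Definition vnorm (C : numClosedFieldType) (p : nat) (x : 'cV[C]_p) : C :=
  sqrtC (\sum_(i < p) `|x i 0| ^+ 2).

Definition fdot (C : numClosedFieldType) (m n : nat) (X Y : 'M[C]_(m, n)) : C :=
  \sum_(i < m) \sum_(j < n) X i j * (Y i j)^*.

Definition fnorm (C : numClosedFieldType) (m n : nat) (X : 'M[C]_(m, n)) : C :=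
  sqrtC (\sum_(i < m) \sum_(j < n) `|X i j| ^+ 2).

Definition is_adjoint (C : numClosedFieldType) (m n p : nat)
  (A : 'M[C]_(m, n) -> 'cV[C]_p) (Astar : 'cV[C]_p -> 'M[C]_(m, n)) : Prop :=
  forall X y, vdot (A X) y = fdot X (Astar y).

Definition rip_bound (C : numClosedFieldType) (m n p r : nat)
  (A : 'M[C]_(m, n) -> 'cV[C]_p) (d : C) : Prop :=
  forall X : 'M[C]_(m, n), (\rank X <= r)%N ->
    (1 - d) * fnorm X ^+ 2 <= vnorm (A X) ^+ 2 /\
    vnorm (A X) ^+ 2 <= (1 + d) * fnorm X ^+ 2.

Definition is_RIC (C : numClosedFieldType) (m n p r : nat)
  (A : 'M[C]_(m, n) -> 'cV[C]_p) (d : C) : Prop :=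
  [/\ 0 <= d, rip_bound r A d &
      forall d', 0 <= d' -> rip_bound r A d' -> d <= d'].

Definition atom_set (C : numClosedFieldType) (m n : nat)
  (O : 'M[C]_(m, n) -> Prop) : Prop :=
  (forall a, O a -> \rank a = 1%N /\ fnorm a = 1) /\
  (forall X : 'M[C]_(m, n), \rank X = 1%N ->
     exists a, [/\ O a, (exists c : C, X = c *: a) &
       forall b, O b -> (exists c : C, X = c *: b) -> b = a]).

Definition orth_proj_onto (C : numClosedFieldType) (m n : nat)
  (U : {vspace 'M[C]_(m, n)}) (P : 'M[C]_(m, n) -> 'M[C]_(m, n)) : Prop :=
  forall X, P X \in U /\ (forall Y, Y \in U -> fdot (X - P X) Y = 0).

Definition orth_proj (C : numClosedFieldType) (m n : nat)
  (P : 'M[C]_(m, n) -> 'M[C]_(m, n)) : Prop :=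
  [/\ linear P, forall X, P (P X) = P X &
      forall X Y, fdot (P X) Y = fdot X (P Y)].

From HB Require Import structures.
From mathcomp Require Import all_boot all_order all_algebra.
From mathcomp Require Import ring.

Set Implicit Arguments.
Unset Strict Implicit.
Unset Printing Implicit Defensive.
Import Order.TTheory GRing.Theory Num.Theory.
Local Open Scope ring_scope.

(* Y := P P_Psi X lies in span(Psi), so rank Y <= |Psi| <= r, and Y is fixed
   by both projections.  Since both are self-adjoint,
   <Y, P P_Psi A^*A Y> = <Y, A^*A Y> = ||A Y||^2 >= (1 - delta) ||Y||^2, and
   any lower bound c ||Y||^2 <= <Y, W> forces c ||Y|| <= ||W||. *)

Section FrobeniusProduct.
Variables (C : numClosedFieldType) (m n : nat).
Implicit Types (X Y Z : 'M[C]_(m, n)) (a : C).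

Lemma fdotBl X Y Z : fdot (X - Y) Z = fdot X Z - fdot Y Z.
Proof.
rewrite /fdot -sumrB; apply: eq_bigr => i _.
by rewrite -sumrB; apply: eq_bigr => j _; rewrite !mxE mulrBl.
Qed.

Lemma fdotZl a X Z : fdot (a *: X) Z = a * fdot X Z.
Proof.
rewrite /fdot mulr_sumr; apply: eq_bigr => i _.
by rewrite mulr_sumr; apply: eq_bigr => j _; rewrite mxE mulrA.
Qed.

Lemma fdotC X Y : fdot Y X = (fdot X Y)^*.
Proof.
rewrite /fdot rmorph_sum; apply: eq_bigr => i _.
rewrite rmorph_sum; apply: eq_bigr => j _.
by rewrite rmorphM /= conjCK mulrC.
Qed.

Lemma fdotBr X Y Z : fdot X (Y - Z) = fdot X Y - fdot X Z.
Proof. by rewrite fdotC fdotBl rmorphB /= -!fdotC. Qed.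

Lemma fdotZr a X Z : fdot X (a *: Z) = a^* * fdot X Z.
Proof. by rewrite fdotC fdotZl rmorphM /= -fdotC. Qed.

Lemma fdotxxE X : fdot X X = \sum_i \sum_j `|X i j| ^+ 2.
Proof. by apply: eq_bigr => i _; apply: eq_bigr => j _; rewrite normCK. Qed.

Lemma fdotxx X : fdot X X = fnorm X ^+ 2.
Proof. by rewrite /fnorm sqrtCK fdotxxE. Qed.

Lemma fnorm_ge0 X : 0 <= fnorm X.
Proof.
rewrite /fnorm sqrtC_ge0; apply: sumr_ge0 => i _; apply: sumr_ge0 => j _.
exact: exprn_ge0.
Qed.

Lemma fdotxx_eq0 X : fdot X X = 0 -> X = 0.
Proof.
have entry_ge0 i j : 0 <= `|X i j| ^+ 2 by rewrite exprn_ge0.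
have row_ge0 i : 0 <= \sum_j `|X i j| ^+ 2 by rewrite sumr_ge0.
rewrite fdotxxE => /(psumr_eq0P (fun i _ => row_ge0 i)) rows0.
apply/matrixP => i j; rewrite mxE.
have /eqP := psumr_eq0P (fun k _ => entry_ge0 i k) (rows0 i isT) (i := j) isT.
by rewrite expf_eq0 normr_eq0 => /eqP.
Qed.

Lemma fnorm_ge_of_fdot_ge c Y W : c \is Num.real ->
  c * fnorm Y ^+ 2 <= fdot Y W -> c * fnorm Y <= fnorm W.
Proof.
move=> c_real cY_le.
have [c_le0 | c_gt0] := real_leP c_real (real0 C).
  exact: le_trans (mulr_le0_ge0 c_le0 (fnorm_ge0 Y)) (fnorm_ge0 W).
set s := fdot Y W in cY_le.
have s_real : s \is Num.real.
  rewrite -(ler_real cY_le); apply: realM => //.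
  exact/ger0_real/exprn_ge0/fnorm_ge0.
(* 0 <= ||c Y - W||^2 = c^2 ||Y||^2 - 2 c s + ||W||^2 and c s >= c^2 ||Y||^2 *)
have expand : fdot (c *: Y - W) (c *: Y - W) =
    c ^+ 2 * fnorm Y ^+ 2 - c * s *+ 2 + fnorm W ^+ 2.
  rewrite !fdotBl !fdotBr !fdotZl !fdotZr (fdotC Y W) -/s.
  by rewrite !conj_Creal // !fdotxx; ring.
have cs_ge : c * (c * fnorm Y ^+ 2) <= c * s by rewrite ler_pM2l.
have sqr_le : (c * fnorm Y) ^+ 2 <= fnorm W ^+ 2.
  rewrite -subr_ge0 (_ : _ - _ = fdot (c *: Y - W) (c *: Y - W) +
      (c * s - c * (c * fnorm Y ^+ 2)) *+ 2); last by rewrite expand; ring.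
  by rewrite addr_ge0 ?mulrn_wge0 ?subr_ge0 // fdotxx exprn_ge0 ?fnorm_ge0.
have cY_ge0 : 0 <= c * fnorm Y := mulr_ge0 (ltW c_gt0) (fnorm_ge0 Y).
by move: sqr_le; rewrite ler_sqr // nnegrE fnorm_ge0.
Qed.

End FrobeniusProduct.

Lemma vdotxx (C : numClosedFieldType) p (x : 'cV[C]_p) : vdot x x = vnorm x ^+ 2.
Proof. by rewrite /vnorm sqrtCK /vdot; apply: eq_bigr => i _; rewrite normCK. Qed.

Section OrthogonalProjectionOnto.
Variables (C : numClosedFieldType) (m n : nat) (U : {vspace 'M[C]_(m, n)}).
Variable PU : 'M[C]_(m, n) -> 'M[C]_(m, n).
Hypothesis PU_orth : orth_proj_onto U PU.

Lemma orth_proj_onto_mem X : PU X \in U.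
Proof. by case: (PU_orth X). Qed.

Lemma orth_proj_onto_id X : X \in U -> PU X = X.
Proof.
move=> XU; apply/eqP; rewrite eq_sym -subr_eq0; apply/eqP/fdotxx_eq0.
by case: (PU_orth X) => PUX_U; apply; rewrite memvB.
Qed.

Lemma orth_proj_onto_fdot X Y : fdot X (PU Y) = fdot (PU X) (PU Y).
Proof.
case: (PU_orth X) => _ /(_ _ (orth_proj_onto_mem Y)).
by rewrite fdotBl => /eqP; rewrite subr_eq0 => /eqP.
Qed.

Lemma orth_proj_onto_sym X Y : fdot (PU X) Y = fdot X (PU Y).
Proof. by rewrite fdotC orth_proj_onto_fdot -fdotC -orth_proj_onto_fdot. Qed.

End OrthogonalProjectionOnto.

Lemma mxrank_span_le (F : fieldType) m n (s : seq 'M[F]_(m, n)) Y :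
  (forall a, a \in s -> \rank a <= 1)%N -> Y \in <<s>>%VS -> (\rank Y <= size s)%N.
Proof.
elim: s Y => [|a s IHs] Y s_rank.
  by rewrite span_nil memv0 => /eqP ->; rewrite mxrank0.
rewrite span_cons => /memv_addP [_ /vlineP [k ->] [Z Z_span ->]].
apply: leq_trans (mxrank_add _ _) _; rewrite /= -add1n leq_add //.
  by apply: leq_trans (mxrank_scale _ _) (s_rank a (mem_head _ _)).
by apply: IHs => // b b_s; apply: s_rank; rewrite inE b_s orbT.
Qed.

Theorem proposition4 (C : numClosedFieldType) (m n p r : nat)
  (A : {linear 'M[C]_(m, n) -> 'cV[C]_p}) (Astar : 'cV[C]_p -> 'M[C]_(m, n))
  (d : C) (O : 'M[C]_(m, n) -> Prop) (Psi : seq 'M[C]_(m, n))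
  (PPsi P : 'M[C]_(m, n) -> 'M[C]_(m, n)) :
  is_adjoint A Astar ->
  is_RIC r A d ->
  atom_set O ->
  uniq Psi -> (forall a, a \in Psi -> O a) -> (size Psi <= r)%N ->
  orth_proj_onto <<Psi>>%VS PPsi ->
  orth_proj P ->
  (forall X, P (PPsi X) = PPsi (P X)) ->
  forall X : 'M[C]_(m, n),
    (1 - d) * fnorm (P (PPsi X)) <= fnorm (P (PPsi (Astar (A (P (PPsi X)))))).
Proof.
move=> A_adj [d_ge0 A_rip _] [atom_rank1 _] _ Psi_atoms Psi_size PPsi_orth
  [_ P_idem P_sym] P_PPsi X.
set Y := P (PPsi X).
have Y_span : Y \in <<Psi>>%VS by rewrite /Y P_PPsi (orth_proj_onto_mem PPsi_orth).
have PY : P Y = Y by rewrite /Y P_idem.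
have PPsiY : PPsi Y = Y := orth_proj_onto_id PPsi_orth Y_span.
have Y_rank : (\rank Y <= r)%N.
  apply: leq_trans Psi_size; apply: mxrank_span_le Y_span => a /Psi_atoms.
  by case/atom_rank1 => ->.
apply: fnorm_ge_of_fdot_ge; first by rewrite realB ?ger0_real.
rewrite -P_sym PY -(orth_proj_onto_sym PPsi_orth) PPsiY -A_adj vdotxx.
by case: (A_rip Y Y_rank).
Qed.
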